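(* Let $(X,d)$ be a compact metric space and let $f_1,f_2:X\to X$ be continuous. Suppose there exists $0<\lambda<1$ such that for all nonempty open sets $U,V\subset X$ there exist $x\in U$ and $y\in V$ with $d(f_i(x),f_i(y))<\lambda\, d(x,y)$ for $i=1,2$. Then the multiple mapping $F=\{f_1,f_2\}$ is (Hausdorff metric) accessible.
   Context: For the multiple mapping $F=\{f_1,f_2\}$ and $n\ge 1$, $F^n(x)=\{f_{i_1}f_{i_2}\cdots f_{i_n}(x)\mid i_1,\dots,i_n\in\{1,2\}\}$. The Hausdorff metric on nonempty compact subsets is $d_H(A,B)=\max\{\sup_{a\in A}\inf_{b\in B}d(a,b),\sup_{b\in B}\inf_{a\in A}d(a,b)\}$. $F$ is (Hausdorff metric) accessible if for every $\epsilon>0$ and all nonempty open $U,V\subset X$ there exist $x\in U$, $y\in V$ and $n\in\mathbb{Z}^+=\{1,2,\dots\}$ with $d_H(F^n(x),F^n(y))<\epsilon$. *)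

From HB Require Import structures.
From mathcomp Require Import all_boot all_order all_algebra.
From mathcomp Require Import all_classical all_reals all_analysis.
Set Implicit Arguments. Unset Strict Implicit. Unset Printing Implicit Defensive.
Import Order.TTheory GRing.Theory Num.Theory.
Local Open Scope classical_set_scope.
Local Open Scope ring_scope.

(* The composition f_{i_1} f_{i_2} ... f_{i_n} (x) for the word w = [i_1;...;i_n];
   index true stands for f_1 and false for f_2. *)
Definition word_apply {X : Type} (f1 f2 : X -> X) (w : seq bool) (x : X) : X :=
  foldr (fun (i : bool) y => (if i then f1 else f2) y) x w.

Definition Fn {X : Type} (f1 f2 : X -> X) (n : nat) (x : X) : set X :=
  [set word_apply f1 f2 (tval w) x | w in [set: n.-tuple bool]].

Definition hausdorff_dist {R : realType} {X : metricType R} (A B : set X) : R :=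
  Num.max (sup [set inf [set mdist a b | b in B] | a in A])
          (sup [set inf [set mdist a b | a in A] | b in B]).

Definition accessible {R : realType} {X : metricType R} (f1 f2 : X -> X) : Prop :=
  forall (eps : R), 0 < eps ->
  forall U V : set X, open U -> open V -> U !=set0 -> V !=set0 ->
  exists x y (n : nat), [/\ U x, V y, (0 < n)%N &
                          hausdorff_dist (Fn f1 f2 n x) (Fn f1 f2 n y) < eps].

From HB Require Import structures.
From mathcomp Require Import all_boot all_order all_algebra.
From mathcomp Require Import all_classical all_reals all_analysis.
From mathcomp Require Import lra.
Import Order.TTheory GRing.Theory Num.Theory.
Local Open Scope classical_set_scope.
Local Open Scope ring_scope.

(* The pairs (x, y) with d(f x, f y) <= lambda d(x, y) meet every open box
   U x V, and by continuity the inequality passes to the closure, so f1 and f2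
   are lambda-Lipschitz.  Applying the same word w to x and to y then moves the
   points at most lambda^n d(x, y) apart, which bounds the Hausdorff distance
   between F^n(x) and F^n(y); this tends to 0 since lambda < 1. *)

Section MetricLipschitz.
Context {R : realType} {X : metricType R}.

Lemma mdist_quadrangle (p q x y : X) :
  mdist p q <= mdist p x + mdist x y + mdist q y.
Proof.
apply: (le_trans (metric_triangle _ y _)).
by rewrite (metric_sym y q) lerD2r metric_triangle.
Qed.

Lemma open_nbhs_mdist_lt {f : X -> X} {r : R} (z : X) :
  continuous f -> 0 < r ->
  exists2 W : set X, open W /\ W z &
    forall x, W x -> mdist z x < r /\ mdist (f z) (f x) < r.
Proof.
move=> cf r0.
have : nbhs z (fun x => mdist z x < r /\ mdist (f z) (f x) < r).
  near=> x; split; near: x.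
  - exact: (metricType_numDomainType.cvgr_dist_lt (@cvg_id _ (nbhs z))).
  - exact: (metricType_numDomainType.cvgr_dist_lt (cf z)).
by rewrite nbhsE => -[W [oW Wz] sW]; exists W.
Unshelve. all: by end_near.
Qed.

Lemma lipschitz_of_dense_contraction (f : X -> X) (lam : R) :
  continuous f -> 0 <= lam ->
  (forall U V : set X, open U -> open V -> U !=set0 -> V !=set0 ->
     exists x y, [/\ U x, V y & mdist (f x) (f y) <= lam * mdist x y]) ->
  forall p q, mdist (f p) (f q) <= lam * mdist p q.
Proof.
move=> cf lam0 dense p q; apply/ler_addgt0Pr => e e0.
set r := e / (2 * (lam + 1)).
have lam1_gt0 : 0 < lam + 1 by rewrite ltr_wpDl.
have r0 : 0 < r by rewrite divr_gt0 // mulr_gt0.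
have er : e = 2 * (lam + 1) * r by rewrite /r mulrC divfK // mulf_neq0 ?gt_eqF.
have [U [oU Up] nearU] := open_nbhs_mdist_lt p cf r0.
have [V [oV Vq] nearV] := open_nbhs_mdist_lt q cf r0.
have [x [y [Ux Vy fxy]]] := dense U V oU oV (ex_intro _ p Up) (ex_intro _ q Vq).
have [px fpx] := nearU x Ux; have [qy fqy] := nearV y Vy.
have dxy : lam * mdist x y <= lam * (mdist p x + mdist p q + mdist q y).
  by rewrite ler_wpM2l // (metric_sym p x) (metric_sym q y) mdist_quadrangle.
have lam_px : lam * mdist p x <= lam * r by rewrite ler_wpM2l // ltW.
have lam_qy : lam * mdist q y <= lam * r by rewrite ler_wpM2l // ltW.
have := mdist_quadrangle (f p) (f q) (f x) (f y).
rewrite !mulrDr in dxy; clearbody r.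
lra.
Qed.

Lemma mdist_word_apply_le {f1 f2 : X -> X} {lam : R} : 0 <= lam ->
  (forall p q, mdist (f1 p) (f1 q) <= lam * mdist p q) ->
  (forall p q, mdist (f2 p) (f2 q) <= lam * mdist p q) ->
  forall w p q, mdist (word_apply f1 f2 w p) (word_apply f1 f2 w q)
                <= lam ^+ size w * mdist p q.
Proof.
move=> lam0 lip1 lip2; elim=> [|i w IH] p q /=; first by rewrite mul1r.
rewrite exprS -mulrA (le_trans _ (ler_wpM2l lam0 (IH p q))) //.
by case: i; [apply: lip1 | apply: lip2].
Qed.

End MetricLipschitz.

Lemma sup_inf_image_le {R : realType} {I T : Type} (d : T -> T -> R)
    (S : set I) (g h : I -> T) (c : R) :
  (forall a b, 0 <= d a b) -> S !=set0 -> (forall i, S i -> d (g i) (h i) <= c) ->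
  sup [set inf [set d a b | b in h @` S] | a in g @` S] <= c.
Proof.
move=> d0 [i0 Si0] dgh; apply: ge_sup.
  by exists (inf [set d (g i0) b | b in h @` S]); exists (g i0) => //; exists i0.
move=> _ [_ [i Si <-] <-]; apply: le_trans (dgh i Si).
apply: ge_inf; last by exists (h i) => //; exists i.
by exists 0 => _ [b _ <-].
Qed.

Lemma hausdorff_dist_image_le {R : realType} {X : metricType R} {I : Type}
    (S : set I) (g h : I -> X) (c : R) :
  S !=set0 -> (forall i, S i -> mdist (g i) (h i) <= c) ->
  hausdorff_dist (g @` S) (h @` S) <= c.
Proof.
move=> S0 dgh; have d0 (a b : X) : 0 <= mdist a b := mdist_ge0 a b.
rewrite /hausdorff_dist ge_max sup_inf_image_le //=.
by apply: (sup_inf_image_le (fun b a => mdist a b)).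
Qed.

Lemma exists_expr_mul_lt {R : realType} {lam D eps : R} :
  0 <= lam < 1 -> 0 <= D -> 0 < eps -> exists n, lam ^+ n.+1 * D < eps.
Proof.
move=> /andP[lam0 lam1] D0 eps0.
have D1 : 0 < D + 1 by rewrite ltr_wpDl.
have lam_norm : `|lam| < 1 by rewrite ger0_norm.
have [N _ smallN] := @cvgr0_norm_lt _ R^o _ _ _ _ (cvg_expr lam_norm) _
  (divr_gt0 eps0 D1).
have := smallN N.+1 (leqnSn N); rewrite /= ger0_norm ?exprn_ge0 // => lamN.
exists N; rewrite (le_lt_trans (y := lam ^+ N.+1 * (D + 1))) //.
  by rewrite ler_wpM2l ?exprn_ge0 ?lerDl.
by rewrite -ltr_pdivlMr.
Qed.

Theorem theorem3p9 (R : realType) (X : metricType R) (f1 f2 : X -> X) :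
  compact [set: X] -> continuous f1 -> continuous f2 ->
  (exists lambda : R, 0 < lambda < 1 /\
     forall U V : set X, open U -> open V -> U !=set0 -> V !=set0 ->
     exists x y, [/\ U x, V y,
       mdist (f1 x) (f1 y) < lambda * mdist x y &
       mdist (f2 x) (f2 y) < lambda * mdist x y]) ->
  accessible f1 f2.
Proof.
move=> _ cf1 cf2 [lam [/andP[lam0 lam1] dense]] eps eps0 U V oU oV [x Ux] [y Vy].
have lam01 : 0 <= lam < 1 by rewrite ltW.
have [lip1 lip2] : (forall p q, mdist (f1 p) (f1 q) <= lam * mdist p q) /\
                   (forall p q, mdist (f2 p) (f2 q) <= lam * mdist p q).
  split; apply: lipschitz_of_dense_contraction; rewrite ?ltW // => U' V' oU' oV' U'0 V'0;
    have [x' [y' [? ? ? ?]]] := dense U' V' oU' oV' U'0 V'0;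
    by exists x', y'; split => //; apply: ltW.
have [n small_n] := exists_expr_mul_lt lam01 (mdist_ge0 x y) eps0.
exists x, y, n.+1; split => //; apply: le_lt_trans small_n.
apply: hausdorff_dist_image_le => [|w _]; first by exists (nseq_tuple n.+1 false).
by have := mdist_word_apply_le (ltW lam0) lip1 lip2 w x y; rewrite size_tuple.
Qed.
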